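(* Let $k>0$ be sufficiently large and let $\theta^{(1)}$ be the angle function of the most contracted direction $e^{(1)}(y)=(\cos\theta^{(1)}(y),\sin\theta^{(1)}(y))$ of the standard map defined below. Then $\theta^{(1)}$ is strictly decreasing on $[0,1/2]$ ($e^{(1)}$ rotates clockwise) and strictly increasing on $[1/2,1]$ ($e^{(1)}$ rotates counter-clockwise); $\theta^{(1)}(0)=\theta^{(1)}(1)=\pi+\tfrac12\tan^{-1}\varphi(0)$ is close to $\pi$ (within order $1/k$, $e^{(1)}$ near the negative horizontal semi-axis) and $\theta^{(1)}(1/2)=\tfrac12\tan^{-1}\varphi(1/2)$ is close to $0$ (within order $1/k$, $e^{(1)}$ near the positive horizontal semi-axis); $e^{(1)}$ is along the negative diagonal ($\theta^{(1)}=3\pi/4$) at $y=\delta^-$ and $y=1-\delta^-$, vertical ($\theta^{(1)}=\pi/2$) at $y=\delta^*$ and $y=1-\delta^*$, and along the positive diagonal ($\theta^{(1)}=\pi/4$) at $y=\delta^+$ and $y=1-\delta^+$.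
   Context: Standard map $f_k(x,y)=(x+k\sin(2\pi y),\,x+y+k\sin(2\pi y))\bmod 1$; $\psi_c(y)=2\pi k\cos(2\pi y)$; $\varphi(y)=-\frac{4\psi_c+2}{2\psi_c^2+2\psi_c-1}$. $\delta^*=\frac1{2\pi}\cos^{-1}(-\frac{1}{4\pi k})$, $\delta^{\pm}=\frac1{2\pi}\cos^{-1}(-\frac{1\pm\sqrt3}{4\pi k})$, with $\cos^{-1}\in[0,\pi]$, $\tan^{-1}\in[-\pi/2,\pi/2]$ (and $\tan^{-1}(\pm\infty)=\pm\pi/2$). The angle function is $\theta^{(1)}(y)=\pi+\frac12\tan^{-1}\varphi(y)$ for $y\in[0,\delta^-]\cup[1-\delta^-,1]$, $\frac\pi2+\frac12\tan^{-1}\varphi(y)$ for $y\in[\delta^-,\delta^+]\cup[1-\delta^+,1-\delta^-]$, and $\frac12\tan^{-1}\varphi(y)$ for $y\in[\delta^+,1-\delta^+]$; for large $k$ the vector $(\cos\theta^{(1)},\sin\theta^{(1)})$ spans the most contracted direction of $Df_k$ at points with second coordinate $y$. *)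

From Stdlib Require Import Reals.
From Coquelicot Require Import Coquelicot.
Open Scope R_scope.

Definition psi_c (k y : R) : R := 2 * PI * k * cos (2 * PI * y).

Definition varphi (k y : R) : R :=
  - (4 * psi_c k y + 2) / (2 * (psi_c k y) ^ 2 + 2 * psi_c k y - 1).

Definition delta_star (k : R) : R := / (2 * PI) * acos (- (1 / (4 * PI * k))).
Definition delta_plus (k : R) : R := / (2 * PI) * acos (- ((1 + sqrt 3) / (4 * PI * k))).
Definition delta_minus (k : R) : R := / (2 * PI) * acos (- ((1 - sqrt 3) / (4 * PI * k))).

(* The piecewise formula of the paper (at the overlapping endpoints the
   first listed branch is used; this is overridden at the poles below). *)
Definition theta_formula (k y : R) : R :=
  if Rle_dec y (delta_minus k) then PI + / 2 * atan (varphi k y)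
  else if Rle_dec y (delta_plus k) then PI / 2 + / 2 * atan (varphi k y)
  else if Rle_dec y (1 - delta_plus k) then / 2 * atan (varphi k y)
  else if Rle_dec y (1 - delta_minus k) then PI / 2 + / 2 * atan (varphi k y)
  else PI + / 2 * atan (varphi k y).

(* Poles of varphi in [0,1]: there the denominator vanishes and varphi = +-oo;
   the paper's convention tan^{-1}(+-oo) = +-pi/2 is the one-sided limit of
   tan^{-1}(varphi) along the branch. *)
Definition is_pole (k y : R) : Prop :=
  y = delta_minus k \/ y = delta_plus k \/ y = 1 - delta_plus k \/ y = 1 - delta_minus k.

Definition left_limit (f : R -> R) (x : R) : R :=
  iota (fun L : R => filterlim f (at_left x) (locally L)).

Definition theta1 (k y : R) : R :=
  if Req_EM_T y (delta_minus k) then left_limit (theta_formula k) y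
  else if Req_EM_T y (delta_plus k) then left_limit (theta_formula k) y
  else if Req_EM_T y (1 - delta_plus k) then left_limit (theta_formula k) y
  else if Req_EM_T y (1 - delta_minus k) then left_limit (theta_formula k) y
  else theta_formula k y.

From Stdlib Require Import Reals Lra Psatz.
From Coquelicot Require Import Coquelicot.
Open Scope R_scope.

(* Writing p = psi_c k y, one has varphi k y = phi_rat p, where
   phi_rat p = 1 / (p_minus - p) + 1 / (p_plus - p) has poles p_plus < p_minus,
   is strictly increasing between consecutive poles, and tends to -oo just
   right of a pole and to +oo just left of it.  Adding pi/2 to (1/2) atan phi_rat
   each time p crosses a pole therefore gives a strictly increasing function of p,
   lifted_angle, and for k >= 1 the branch choice defining theta1 is exactly
   lifted_angle o psi_c: the poles are reached at y = delta_-, delta_+, 1 - delta_+,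
   1 - delta_-, where the one-sided limits supply the values 3 pi/4 and pi/4.  As
   psi_c k decreases on [0, 1/2] and increases on [1/2, 1], monotonicity follows;
   the vertical direction comes from psi_c k delta_* = -1/2, a zero of phi_rat, and
   the endpoint estimates from |atan x| <= |x| and |phi_rat p| <= 2 / (|p| - 2). *)

Definition p_minus : R := (sqrt 3 - 1) / 2.
Definition p_plus : R := - (1 + sqrt 3) / 2.
Definition phi_rat (p : R) : R := - (4 * p + 2) / (2 * p ^ 2 + 2 * p - 1).

Lemma sqrt3_facts : sqrt 3 * sqrt 3 = 3 /\ 17 / 10 < sqrt 3 < 18 / 10.
Proof.
  assert (h3 : sqrt 3 * sqrt 3 = 3) by (apply sqrt_sqrt; lra).
  assert (h0 : 0 <= sqrt 3) by apply sqrt_pos.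
  split; [exact h3 | split; nra].
Qed.

Lemma poles_bounds : -2 < p_plus < -1/2 /\ -1/2 < p_minus < 1/2.
Proof. destruct sqrt3_facts as [_ hs]. unfold p_plus, p_minus. lra. Qed.

Lemma phi_rat_partial_fractions p : p <> p_minus -> p <> p_plus ->
  phi_rat p = / (p_minus - p) + / (p_plus - p).
Proof.
  intros hm hp. destruct sqrt3_facts as [h3 _].
  assert (hD : 2 * p ^ 2 + 2 * p - 1 = 2 * (p_minus - p) * (p_plus - p))
    by (unfold p_minus, p_plus; nra).
  assert (hsum : p_minus + p_plus = -1) by (unfold p_minus, p_plus; field).
  unfold phi_rat. rewrite hD.
  replace (- (4 * p + 2)) with (2 * ((p_minus - p) + (p_plus - p))) by lra.
  field. split; lra.
Qed.

Lemma Rinv_sub_increasing c a b : a < b -> b < c \/ c < a -> / (c - a) < / (c - b).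
Proof. intros hab hc. apply Rinv_lt_contravar; destruct hc; nra. Qed.

Definition same_branch (a b : R) : Prop :=
  b < p_plus \/ (p_plus < a /\ b < p_minus) \/ p_minus < a.

Lemma phi_rat_increasing a b : a < b -> same_branch a b -> phi_rat a < phi_rat b.
Proof.
  intros hab hbr. pose proof poles_bounds.
  assert (sides : forall c, c = p_minus \/ c = p_plus -> b < c \/ c < a)
    by (unfold same_branch in hbr; intros c [-> | ->]; lra).
  rewrite !phi_rat_partial_fractions
    by (destruct (sides p_minus), (sides p_plus); lra).
  apply Rplus_lt_compat; apply Rinv_sub_increasing; auto.
Qed.

Lemma Rabs_atan_le x : Rabs (atan x) <= Rabs x.
Proof.
  assert (pos : forall z, 0 < z -> 0 <= atan z <= z).
  { intros z hz.
    destruct (MVT_cor1 atan 0 z derivable_pt_atan hz) as [c [hc _]].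
    rewrite derive_pt_atan, atan_0 in hc.
    assert (hq : 0 < / (1 + c²) <= 1).
    { pose proof (Rle_0_sqr c). split; [apply Rinv_0_lt_compat; lra|].
      rewrite <- Rinv_1. apply Rinv_le_contravar; lra. }
    unfold Rdiv in hc. rewrite Rmult_1_l in hc. split; nra. }
  destruct (Rtotal_order x 0) as [h | [-> | h]].
  - pose proof (pos (- x) ltac:(lra)) as hp. rewrite atan_opp in hp.
    rewrite Rabs_left1, Rabs_left by lra. lra.
  - rewrite atan_0. lra.
  - pose proof (pos x h). rewrite !Rabs_right by lra. lra.
Qed.

Lemma Rabs_phi_rat_le p : 2 < Rabs p -> Rabs (phi_rat p) <= 2 / (Rabs p - 2).
Proof.
  intros hp. destruct poles_bounds as [hpl hmi].
  assert (hinv : forall c, Rabs c < 2 -> Rabs (/ (c - p)) <= / (Rabs p - 2)).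
  { intros c hc. pose proof (Rabs_triang_inv p c) as ht.
    rewrite Rabs_minus_sym in ht.
    rewrite Rabs_inv. apply Rinv_le_contravar; lra. }
  assert (hnot : forall c, Rabs c < 2 -> p <> c)
    by (intros c hc ->; lra).
  assert (hm : Rabs p_minus < 2) by (apply Rabs_def1; lra).
  assert (hpp : Rabs p_plus < 2) by (apply Rabs_def1; lra).
  rewrite phi_rat_partial_fractions by auto.
  eapply Rle_trans; [apply Rabs_triang|].
  pose proof (hinv _ hm). pose proof (hinv _ hpp). unfold Rdiv. lra.
Qed.

Definition lifted_angle (p : R) : R :=
  if Rlt_dec p p_plus then / 2 * atan (phi_rat p)
  else if Req_EM_T p p_plus then PI / 4
  else if Rlt_dec p p_minus then PI / 2 + / 2 * atan (phi_rat p)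
  else if Req_EM_T p p_minus then 3 * PI / 4
  else PI + / 2 * atan (phi_rat p).

Local Ltac case_lifted_angle :=
  unfold lifted_angle;
  repeat match goal with
  | |- context [Rlt_dec ?x ?y] => destruct (Rlt_dec x y)
  | |- context [Req_EM_T ?x ?y] => destruct (Req_EM_T x y)
  end.

Lemma lifted_angle_lt_p_plus p : p < p_plus -> lifted_angle p = / 2 * atan (phi_rat p).
Proof. intros. case_lifted_angle; lra. Qed.

Lemma lifted_angle_p_plus : lifted_angle p_plus = PI / 4.
Proof. case_lifted_angle; lra. Qed.

Lemma lifted_angle_between p : p_plus < p < p_minus ->
  lifted_angle p = PI / 2 + / 2 * atan (phi_rat p).
Proof. intros. case_lifted_angle; lra. Qed.

Lemma lifted_angle_p_minus : lifted_angle p_minus = 3 * PI / 4.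
Proof. pose proof poles_bounds. case_lifted_angle; lra. Qed.

Lemma lifted_angle_gt_p_minus p : p_minus < p ->
  lifted_angle p = PI + / 2 * atan (phi_rat p).
Proof. intros. pose proof poles_bounds. case_lifted_angle; lra. Qed.

Lemma lifted_angle_increasing a b : a < b -> lifted_angle a < lifted_angle b.
Proof.
  intros hab. pose proof poles_bounds. pose proof PI_RGT_0.
  pose proof (atan_bound (phi_rat a)). pose proof (atan_bound (phi_rat b)).
  assert (branch : same_branch a b -> atan (phi_rat a) < atan (phi_rat b))
    by (intros; apply atan_increasing, phi_rat_increasing; assumption).
  unfold same_branch in branch.
  case_lifted_angle; try lra;
    (assert (atan (phi_rat a) < atan (phi_rat b)) by (apply branch; lra); lra).
Qed.

Lemma psi_c_decreasing k x y : 0 < k -> 0 <= x -> x < y -> y <= 1 / 2 ->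
  psi_c k y < psi_c k x.
Proof.
  intros. pose proof PI_RGT_0. unfold psi_c.
  apply Rmult_lt_compat_l; [nra|]. apply cos_decreasing_1; nra.
Qed.

Lemma psi_c_increasing k x y : 0 < k -> 1 / 2 <= x -> x < y -> y <= 1 ->
  psi_c k x < psi_c k y.
Proof.
  intros. pose proof PI_RGT_0. unfold psi_c.
  apply Rmult_lt_compat_l; [nra|]. apply cos_increasing_1; nra.
Qed.

Lemma psi_c_one_sub k y : psi_c k (1 - y) = psi_c k y.
Proof.
  unfold psi_c. replace (2 * PI * (1 - y)) with (2 * PI - 2 * PI * y) by ring.
  rewrite cos_minus, cos_2PI, sin_2PI. ring.
Qed.

Definition psi_c_preimage (k r : R) : R := / (2 * PI) * acos (r / (2 * PI * k)).

Lemma psi_c_preimage_spec k r : 0 < k -> - (2 * PI * k) < r < 2 * PI * k ->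
  0 < psi_c_preimage k r < 1 / 2 /\ psi_c k (psi_c_preimage k r) = r.
Proof.
  intros hk hr. pose proof PI_RGT_0.
  assert (hc : -1 < r / (2 * PI * k) < 1).
  { assert (0 < 2 * PI * k) by nra.
    split; [apply Rmult_lt_reg_r with (2 * PI * k) | apply Rmult_lt_reg_r with (2 * PI * k)];
      auto; field_simplify; lra. }
  assert (e : 2 * PI * psi_c_preimage k r = acos (r / (2 * PI * k)))
    by (unfold psi_c_preimage; field; lra).
  pose proof (acos_bound_lt _ hc).
  split; [nra|].
  unfold psi_c. rewrite e, cos_acos by lra. field. lra.
Qed.

Lemma delta_minus_preimage k : 0 < k -> delta_minus k = psi_c_preimage k p_minus.
Proof.
  intros. pose proof PI_RGT_0. unfold delta_minus, psi_c_preimage, p_minus.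
  do 3 f_equal. field. lra.
Qed.

Lemma delta_plus_preimage k : 0 < k -> delta_plus k = psi_c_preimage k p_plus.
Proof.
  intros. pose proof PI_RGT_0. unfold delta_plus, psi_c_preimage, p_plus.
  do 3 f_equal. field. lra.
Qed.

Lemma delta_star_preimage k : 0 < k -> delta_star k = psi_c_preimage k (- 1 / 2).
Proof.
  intros. pose proof PI_RGT_0. unfold delta_star, psi_c_preimage.
  do 3 f_equal. field. lra.
Qed.

Lemma filterlim_atan_p_infty : filterlim atan (Rbar_locally p_infty) (locally (PI / 2)).
Proof.
  apply filterlim_ext_loc with (fun x => PI / 2 - atan (/ x)).
  - exists 0. intros x hx. rewrite atan_inv by lra. ring.
  - apply (filterlim_comp _ _ _ (fun x => / x) (fun u => PI / 2 - atan u) _ (locally 0)).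
    + apply (filterlim_Rbar_inv p_infty). discriminate.
    + replace (locally (PI / 2)) with (locally (PI / 2 - atan 0))
        by (rewrite atan_0; f_equal; ring).
      apply (ex_derive_continuous (fun u => PI / 2 - atan u)). auto_derive; auto.
Qed.

Lemma filterlim_atan_m_infty :
  filterlim atan (Rbar_locally m_infty) (locally (- (PI / 2))).
Proof.
  apply filterlim_ext with (fun x => - atan (- x)).
  { intros x. rewrite atan_opp. ring. }
  apply (filterlim_comp _ _ _ Ropp (fun u => - atan u) _ (Rbar_locally p_infty)).
  - apply (filterlim_Rbar_opp m_infty).
  - apply (filterlim_comp _ _ _ atan Ropp _ (locally (PI / 2))).
    + exact filterlim_atan_p_infty.
    + apply (filterlim_opp (PI / 2)).
Qed.

Lemma filterlim_within_of {T : Type} {F : (T -> Prop) -> Prop} {FF : Filter F}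
  (f : T -> R) (l : R) (P : R -> Prop) :
  filterlim f F (locally l) -> F (fun x => P (f x)) ->
  filterlim f F (within P (locally l)).
Proof.
  intros hf hP Q hQ. unfold filtermap.
  apply filter_imp with (fun x => P (f x) /\ (P (f x) -> Q (f x))); [tauto|].
  apply filter_and; [exact hP | apply (hf (fun y => P y -> Q y)); exact hQ].
Qed.

Lemma filterlim_const_sub_within c (P : R -> Prop) :
  filterlim (fun p => c - p) (within P (locally c)) (locally 0).
Proof.
  apply (filterlim_filter_le_1 (F := locally c)); [apply filter_le_within|].
  replace (locally 0) with (locally (c - c)) by (f_equal; ring).
  apply (ex_derive_continuous (fun p => c - p)). auto_derive; auto.
Qed.

Lemma filterlim_inv_sub_at_right c :
  filterlim (fun p => / (c - p)) (at_right c) (Rbar_locally m_infty).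
Proof.
  apply (filterlim_comp _ _ _ (fun p => c - p) Rinv _ (at_left 0)).
  - apply filterlim_within_of; [apply filterlim_const_sub_within|].
    unfold at_right, within. apply filter_forall. intros p hp. lra.
  - exact filterlim_Rinv_0_left.
Qed.

Lemma filterlim_inv_sub_at_left c :
  filterlim (fun p => / (c - p)) (at_left c) (Rbar_locally p_infty).
Proof.
  apply (filterlim_comp _ _ _ (fun p => c - p) Rinv _ (at_right 0)).
  - apply filterlim_within_of; [apply filterlim_const_sub_within|].
    unfold at_left, within. apply filter_forall. intros p hp. lra.
  - exact filterlim_Rinv_0_right.
Qed.

Lemma filterlim_phi_rat_pole c (P : R -> Prop) (l : Rbar) :
  c = p_minus \/ c = p_plus -> (forall p, P p -> p <> c) ->
  l = m_infty \/ l = p_infty ->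
  filterlim (fun p => / (c - p)) (within P (locally c)) (Rbar_locally l) ->
  filterlim phi_rat (within P (locally c)) (Rbar_locally l).
Proof.
  intros hc hP hl hinv. destruct sqrt3_facts as [_ hs].
  assert (hcd : exists d, (c = p_minus /\ d = p_plus) \/ (c = p_plus /\ d = p_minus))
    by (destruct hc as [-> | ->]; eauto).
  destruct hcd as [d hcd].
  assert (hdist : Rabs (d - c) = sqrt 3).
  { destruct hcd as [[-> ->] | [-> ->]]; unfold p_minus, p_plus;
      [rewrite Rabs_left | rewrite Rabs_right]; lra. }
  apply filterlim_ext_loc with (fun p => / (c - p) + / (d - p)).
  - exists (mkposreal 1 Rlt_0_1). intros p hb hp.
    change (Rabs (p - c) < 1) in hb.
    assert (hpd : p <> d).
    { intros ->. lra. }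
    rewrite phi_rat_partial_fractions by (destruct hcd as [[-> ->] | [-> ->]]; auto).
    destruct hcd as [[-> ->] | [-> ->]]; [reflexivity | ring].
  - apply (filterlim_comp_2 (H := locally (/ (d - c)))
             (fun p => / (c - p)) (fun p => / (d - p)) Rplus hinv).
    + apply (filterlim_filter_le_1 (F := locally c)); [apply filter_le_within|].
      apply (ex_derive_continuous (fun p => / (d - p))). auto_derive.
      intros h. change (d - c = 0) in h. rewrite h, Rabs_R0 in hdist. lra.
    + apply (filterlim_Rbar_plus l (/ (d - c)) l).
      destruct hl as [-> | ->]; reflexivity.
Qed.

Lemma filterlim_phi_rat_at_right c : c = p_minus \/ c = p_plus ->
  filterlim phi_rat (at_right c) (Rbar_locally m_infty).
Proof.
  intros hc. apply filterlim_phi_rat_pole; auto.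
  - intros p hp ->. lra.
  - apply filterlim_inv_sub_at_right.
Qed.

Lemma filterlim_phi_rat_at_left c : c = p_minus \/ c = p_plus ->
  filterlim phi_rat (at_left c) (Rbar_locally p_infty).
Proof.
  intros hc. apply filterlim_phi_rat_pole; auto.
  - intros p hp ->. lra.
  - apply filterlim_inv_sub_at_left.
Qed.

Lemma left_limit_theta_formula k y0 e A (P : R -> Prop) l L :
  0 < e ->
  (forall y, y0 - e < y < y0 ->
     theta_formula k y = A + / 2 * atan (varphi k y) /\ P (psi_c k y)) ->
  filterlim phi_rat (within P (locally (psi_c k y0))) (Rbar_locally l) ->
  filterlim atan (Rbar_locally l) (locally L) ->
  left_limit (theta_formula k) y0 = A + / 2 * L.
Proof.
  intros he hwin hphi hatan.
  assert (hnear : at_left y0 (fun y => theta_formula k y = A + / 2 * atan (varphi k y)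
                                        /\ P (psi_c k y))).
  { exists (mkposreal e he). intros y hb hy. change (Rabs (y - y0) < e) in hb.
    apply hwin. rewrite Rabs_left in hb by lra. lra. }
  unfold left_limit. apply (@iota_filterlim_locally R_AbsRing R_CompleteNormedModule).
  { apply Proper_StrongProper, at_left_proper_filter. }
  apply filterlim_ext_loc with (fun y => A + / 2 * atan (phi_rat (psi_c k y))).
  { apply (filter_imp _ _ (fun y hy => eq_sym (proj1 hy)) hnear). }
  apply (filterlim_comp _ _ _ (fun y => atan (phi_rat (psi_c k y))) (fun u => A + / 2 * u)
           _ (locally L)).
  - apply (filterlim_comp _ _ _ (fun y => phi_rat (psi_c k y)) atan _ (Rbar_locally l));
      [|exact hatan].
    apply (filterlim_comp _ _ _ (psi_c k) phi_rat _ (within P (locally (psi_c k y0))));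
      [|exact hphi].
    apply filterlim_within_of.
    + apply (filterlim_filter_le_1 (F := locally y0)); [apply filter_le_within|].
      apply (ex_derive_continuous (psi_c k)). unfold psi_c. auto_derive; auto.
    + apply (filter_imp _ _ (fun y hy => proj2 hy) hnear).
  - apply (ex_derive_continuous (fun u => A + / 2 * u)). auto_derive; auto.
Qed.

Lemma psi_c_zero k : psi_c k 0 = 2 * PI * k.
Proof. unfold psi_c. rewrite Rmult_0_r, cos_0. ring. Qed.

Lemma psi_c_half k : psi_c k (1 / 2) = - (2 * PI * k).
Proof. unfold psi_c. replace (2 * PI * (1 / 2)) with PI by field. rewrite cos_PI. ring. Qed.

Lemma Rabs_half_atan_phi_rat_le k p : 1 <= k -> Rabs p = 2 * PI * k ->
  Rabs (/ 2 * atan (phi_rat p)) <= 1 / k.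
Proof.
  intros hk hp. pose proof PI2_3_2.
  assert (hgap : k <= Rabs p - 2) by nra.
  pose proof (Rabs_phi_rat_le p ltac:(lra)) as hphi.
  pose proof (Rabs_atan_le (phi_rat p)).
  assert (/ (Rabs p - 2) <= / k) by (apply Rinv_le_contravar; lra).
  rewrite Rabs_mult, Rabs_inv, Rabs_right by lra.
  unfold Rdiv in *. lra.
Qed.

Section LargeK.

Variable k : R.
Hypothesis k_ge_1 : 1 <= k.

Let k_pos : 0 < k. Proof. lra. Qed.

Lemma psi_c_preimage_small r : -2 <= r <= 2 ->
  0 < psi_c_preimage k r < 1 / 2 /\ psi_c k (psi_c_preimage k r) = r.
Proof.
  intros hr. apply psi_c_preimage_spec; [lra|].
  pose proof PI_RGT_0. pose proof PI2_3_2. nra.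
Qed.

Lemma delta_minus_spec : 0 < delta_minus k < 1 / 2 /\ psi_c k (delta_minus k) = p_minus.
Proof.
  rewrite delta_minus_preimage by lra. apply psi_c_preimage_small.
  pose proof poles_bounds. lra.
Qed.

Lemma delta_plus_spec : 0 < delta_plus k < 1 / 2 /\ psi_c k (delta_plus k) = p_plus.
Proof.
  rewrite delta_plus_preimage by lra. apply psi_c_preimage_small.
  pose proof poles_bounds. lra.
Qed.

Lemma delta_star_spec : 0 < delta_star k < 1 / 2 /\ psi_c k (delta_star k) = - 1 / 2.
Proof.
  rewrite delta_star_preimage by lra. apply psi_c_preimage_small. lra.
Qed.

Lemma delta_minus_lt_delta_plus : delta_minus k < delta_plus k.
Proof.
  destruct delta_minus_spec as [hm em]. destruct delta_plus_spec as [hp ep].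
  pose proof poles_bounds.
  destruct (Rtotal_order (delta_minus k) (delta_plus k)) as [h | [h | h]]; auto.
  - rewrite h, ep in em. lra.
  - pose proof (psi_c_decreasing k (delta_plus k) (delta_minus k) k_pos ltac:(lra) h ltac:(lra)).
    lra.
Qed.

Lemma theta_formula_regular y : 0 <= y <= 1 ->
  y <> delta_minus k -> y <> delta_plus k ->
  y <> 1 - delta_plus k -> y <> 1 - delta_minus k ->
  theta_formula k y = lifted_angle (psi_c k y).
Proof.
  intros hy n1 n2 n3 n4.
  destruct delta_minus_spec as [hm em]. destruct delta_plus_spec as [hp ep].
  pose proof delta_minus_lt_delta_plus as hmp.
  pose proof (psi_c_one_sub k (delta_minus k)) as em'.
  pose proof (psi_c_one_sub k (delta_plus k)) as ep'.
  rewrite em in em'. rewrite ep in ep'.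
  unfold theta_formula.
  destruct (Rle_dec y (delta_minus k)).
  { rewrite lifted_angle_gt_p_minus; [reflexivity|].
    rewrite <- em. apply psi_c_decreasing; lra. }
  destruct (Rle_dec y (delta_plus k)).
  { rewrite lifted_angle_between; [reflexivity|].
    rewrite <- em, <- ep. split; apply psi_c_decreasing; lra. }
  destruct (Rle_dec y (1 - delta_plus k)).
  { rewrite lifted_angle_lt_p_plus; [reflexivity|].
    destruct (Rle_dec y (1 / 2)).
    - rewrite <- ep. apply psi_c_decreasing; lra.
    - rewrite <- ep'. apply psi_c_increasing; lra. }
  destruct (Rle_dec y (1 - delta_minus k)).
  { rewrite lifted_angle_between; [reflexivity|].
    rewrite <- em', <- ep'. split; apply psi_c_increasing; lra. }
  rewrite lifted_angle_gt_p_minus; [reflexivity|].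
  rewrite <- em'. apply psi_c_increasing; lra.
Qed.

Lemma left_limit_at_delta_minus :
  left_limit (theta_formula k) (delta_minus k) = 3 * PI / 4.
Proof.
  destruct delta_minus_spec as [hm em].
  replace (3 * PI / 4) with (PI + / 2 * - (PI / 2)) by field.
  apply (left_limit_theta_formula k (delta_minus k) (delta_minus k) PI
           (fun u => p_minus < u) m_infty);
    [lra | | | exact filterlim_atan_m_infty].
  - intros y hy. split.
    + unfold theta_formula. destruct (Rle_dec y (delta_minus k)); [reflexivity | lra].
    + rewrite <- em. apply psi_c_decreasing; lra.
  - rewrite em. exact (filterlim_phi_rat_at_right p_minus (or_introl eq_refl)).
Qed.

Lemma left_limit_at_delta_plus :
  left_limit (theta_formula k) (delta_plus k) = PI / 4.
Proof.
  destruct delta_minus_spec as [hm em]. destruct delta_plus_spec as [hp ep].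
  pose proof delta_minus_lt_delta_plus.
  replace (PI / 4) with (PI / 2 + / 2 * - (PI / 2)) by field.
  apply (left_limit_theta_formula k (delta_plus k) (delta_plus k - delta_minus k) (PI / 2)
           (fun u => p_plus < u) m_infty); [lra | | | exact filterlim_atan_m_infty].
  - intros y hy. split.
    + unfold theta_formula. destruct (Rle_dec y (delta_minus k)); [lra|].
      destruct (Rle_dec y (delta_plus k)); [reflexivity | lra].
    + rewrite <- ep. apply psi_c_decreasing; lra.
  - rewrite ep. exact (filterlim_phi_rat_at_right p_plus (or_intror eq_refl)).
Qed.

Lemma left_limit_at_one_sub_delta_plus :
  left_limit (theta_formula k) (1 - delta_plus k) = PI / 4.
Proof.
  destruct delta_minus_spec as [hm em]. destruct delta_plus_spec as [hp ep].
  pose proof delta_minus_lt_delta_plus.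
  pose proof (psi_c_one_sub k (delta_plus k)) as ep'. rewrite ep in ep'.
  replace (PI / 4) with (0 + / 2 * (PI / 2)) by field.
  apply (left_limit_theta_formula k (1 - delta_plus k) (1 / 2 - delta_plus k) 0
           (fun u => u < p_plus) p_infty); [lra | | | exact filterlim_atan_p_infty].
  - intros y hy. split.
    + unfold theta_formula. destruct (Rle_dec y (delta_minus k)); [lra|].
      destruct (Rle_dec y (delta_plus k)); [lra|].
      destruct (Rle_dec y (1 - delta_plus k)); [ring | lra].
    + rewrite <- ep'. apply psi_c_increasing; lra.
  - rewrite ep'. exact (filterlim_phi_rat_at_left p_plus (or_intror eq_refl)).
Qed.

Lemma left_limit_at_one_sub_delta_minus :
  left_limit (theta_formula k) (1 - delta_minus k) = 3 * PI / 4.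
Proof.
  destruct delta_minus_spec as [hm em]. destruct delta_plus_spec as [hp ep].
  pose proof delta_minus_lt_delta_plus.
  pose proof (psi_c_one_sub k (delta_minus k)) as em'. rewrite em in em'.
  replace (3 * PI / 4) with (PI / 2 + / 2 * (PI / 2)) by field.
  apply (left_limit_theta_formula k (1 - delta_minus k) (delta_plus k - delta_minus k)
           (PI / 2) (fun u => u < p_minus) p_infty); [lra | | | exact filterlim_atan_p_infty].
  - intros y hy. split.
    + unfold theta_formula. destruct (Rle_dec y (delta_minus k)); [lra|].
      destruct (Rle_dec y (delta_plus k)); [lra|].
      destruct (Rle_dec y (1 - delta_plus k)); [lra|].
      destruct (Rle_dec y (1 - delta_minus k)); [reflexivity | lra].
    + rewrite <- em'. apply psi_c_increasing; lra.
  - rewrite em'. exact (filterlim_phi_rat_at_left p_minus (or_introl eq_refl)).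
Qed.

Lemma theta1_lifted_angle y : 0 <= y <= 1 -> theta1 k y = lifted_angle (psi_c k y).
Proof.
  intros hy.
  destruct delta_minus_spec as [hm em]. destruct delta_plus_spec as [hp ep].
  pose proof (psi_c_one_sub k (delta_minus k)) as em'. rewrite em in em'.
  pose proof (psi_c_one_sub k (delta_plus k)) as ep'. rewrite ep in ep'.
  unfold theta1.
  destruct (Req_EM_T y (delta_minus k)) as [-> | n1].
  { rewrite left_limit_at_delta_minus, em, lifted_angle_p_minus. reflexivity. }
  destruct (Req_EM_T y (delta_plus k)) as [-> | n2].
  { rewrite left_limit_at_delta_plus, ep, lifted_angle_p_plus. reflexivity. }
  destruct (Req_EM_T y (1 - delta_plus k)) as [-> | n3].
  { rewrite left_limit_at_one_sub_delta_plus, ep', lifted_angle_p_plus. reflexivity. }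
  destruct (Req_EM_T y (1 - delta_minus k)) as [-> | n4].
  { rewrite left_limit_at_one_sub_delta_minus, em', lifted_angle_p_minus. reflexivity. }
  apply theta_formula_regular; assumption.
Qed.

Lemma theta1_decreasing x y : 0 <= x -> x < y -> y <= 1 / 2 -> theta1 k y < theta1 k x.
Proof.
  intros. rewrite !theta1_lifted_angle by lra.
  apply lifted_angle_increasing, psi_c_decreasing; lra.
Qed.

Lemma theta1_increasing x y : 1 / 2 <= x -> x < y -> y <= 1 -> theta1 k x < theta1 k y.
Proof.
  intros. rewrite !theta1_lifted_angle by lra.
  apply lifted_angle_increasing, psi_c_increasing; lra.
Qed.

Lemma theta1_one_sub y : 0 <= y <= 1 -> theta1 k (1 - y) = theta1 k y.
Proof. intros. rewrite !theta1_lifted_angle, psi_c_one_sub by lra. reflexivity. Qed.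

Lemma theta1_one : theta1 k 1 = theta1 k 0.
Proof. rewrite <- (theta1_one_sub 0), Rminus_0_r by lra. reflexivity. Qed.

Lemma theta1_zero : theta1 k 0 = PI + / 2 * atan (varphi k 0).
Proof.
  pose proof PI2_3_2. pose proof poles_bounds.
  rewrite theta1_lifted_angle, lifted_angle_gt_p_minus by (rewrite ?psi_c_zero; nra).
  reflexivity.
Qed.

Lemma theta1_half : theta1 k (1 / 2) = / 2 * atan (varphi k (1 / 2)).
Proof.
  pose proof PI2_3_2. pose proof poles_bounds.
  rewrite theta1_lifted_angle, lifted_angle_lt_p_plus by (rewrite ?psi_c_half; nra).
  reflexivity.
Qed.

Lemma theta1_delta_minus : theta1 k (delta_minus k) = 3 * PI / 4.
Proof.
  destruct delta_minus_spec as [hm em].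
  rewrite theta1_lifted_angle, em by lra. apply lifted_angle_p_minus.
Qed.

Lemma theta1_delta_plus : theta1 k (delta_plus k) = PI / 4.
Proof.
  destruct delta_plus_spec as [hp ep].
  rewrite theta1_lifted_angle, ep by lra. apply lifted_angle_p_plus.
Qed.

Lemma theta1_delta_star : theta1 k (delta_star k) = PI / 2.
Proof.
  destruct delta_star_spec as [hs es]. pose proof poles_bounds.
  assert (hzero : phi_rat (- 1 / 2) = 0) by (unfold phi_rat; field; lra).
  rewrite theta1_lifted_angle, es, lifted_angle_between, hzero, atan_0 by lra. ring.
Qed.

End LargeK.

Theorem mainTheorem3 :
  exists K C : R, 0 < K /\ 0 < C /\
  forall k : R, K <= k ->
    (forall x y, 0 <= x -> x < y -> y <= 1 / 2 -> theta1 k y < theta1 k x) /\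
    (forall x y, 1 / 2 <= x -> x < y -> y <= 1 -> theta1 k x < theta1 k y) /\
    theta1 k 0 = PI + / 2 * atan (varphi k 0) /\
    theta1 k 1 = PI + / 2 * atan (varphi k 0) /\
    Rabs (theta1 k 0 - PI) <= C / k /\
    theta1 k (1 / 2) = / 2 * atan (varphi k (1 / 2)) /\
    Rabs (theta1 k (1 / 2)) <= C / k /\
    theta1 k (delta_minus k) = 3 * PI / 4 /\
    theta1 k (1 - delta_minus k) = 3 * PI / 4 /\
    theta1 k (delta_star k) = PI / 2 /\
    theta1 k (1 - delta_star k) = PI / 2 /\
    theta1 k (delta_plus k) = PI / 4 /\
    theta1 k (1 - delta_plus k) = PI / 4.
Proof.
  exists 1, 1. split; [lra|]. split; [lra|]. intros k hk.
  pose proof PI2_3_2.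
  destruct (delta_minus_spec k hk) as [hm _].
  destruct (delta_plus_spec k hk) as [hp _].
  destruct (delta_star_spec k hk) as [hs _].
  rewrite !theta1_one_sub by (auto; lra).
  rewrite theta1_one, theta1_zero, theta1_half by auto.
  repeat split; auto using theta1_decreasing, theta1_increasing, theta1_delta_minus,
    theta1_delta_plus, theta1_delta_star.
  - replace (PI + / 2 * atan (varphi k 0) - PI) with (/ 2 * atan (varphi k 0)) by ring.
    apply Rabs_half_atan_phi_rat_le; auto. rewrite psi_c_zero, Rabs_right; nra.
  - apply Rabs_half_atan_phi_rat_le; auto. rewrite psi_c_half, Rabs_left; nra.
Qed.
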